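(* Let $n\ge 2$ and let $W$ be a channel from $\{1,2\}$ to $\{1,\dots,n\}$. Then $C_{01}(\lambda)=C_{11}(\lambda)$ for every $\lambda\in\Lambda(W)$; consequently $\underline{C}_{01}(W)=1-\overline{P}_W(1)$ and $\overline{C}_{01}(W)=1-\underline{P}_W(1)$.
   Context: A channel is a row-stochastic matrix. With $\mathcal{X}=\{1,\dots,m\}$ (here $m=2$) and $\mathcal{Y}=\{1,\dots,n\}$, a deterministic channel is a 0-1 channel (a map $D:\mathcal{X}\to\mathcal{Y}$); $\mathcal{D}$ is the set of them and $\mathrm{rank}(D)$ the matrix rank. $\Lambda(W)=\{\lambda\text{ probability distribution on }\mathcal{D}: W=\sum_D\lambda_DD\}$. $I(\mu,K)=\sum_x\mu_x D(K_{x,*}\|\mu K)$ (KL divergence, base 2). $C_{11}(\lambda)=\sum_D\lambda_D\log_2\mathrm{rank}(D)$, $C_{01}(\lambda)=\max_\mu\sum_D\lambda_DI(\mu,D)$ over distributions $\mu$ on $\mathcal{X}$. $\underline{C}_{01}(W)=\inf_{\lambda\in\Lambda(W)}C_{01}(\lambda)$, $\overline{C}_{01}(W)=\sup_{\lambda\in\Lambda(W)}C_{01}(\lambda)$. $P_\lambda(r)=\lambda(\{D:\mathrm{rank}(D)=r\})$, $\underline{P}_W(r)=\min_{\lambda\in\Lambda(W)}P_\lambda(r)$, $\overline{P}_W(r)=\max_{\lambda\in\Lambda(W)}P_\lambda(r)$. *)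

From HB Require Import structures.
From mathcomp Require Import all_boot all_order all_algebra.
From mathcomp Require Import all_classical all_reals all_analysis.
Set Implicit Arguments. Unset Strict Implicit. Unset Printing Implicit Defensive.
Import Order.TTheory GRing.Theory Num.Theory.
Local Open Scope ring_scope.
Local Open Scope classical_set_scope.

Section Defs.
Variable R : realType.

Definition log2 (x : R) : R := ln x / ln 2.

(* a channel from {1,2} (= 'I_2) to {1..n} (= 'I_n): row-stochastic 2 x n matrix *)
Definition is_channel (n : nat) (W : 'M[R]_(2, n)) : Prop :=
  (forall i j, 0 <= W i j) /\ (forall i, \sum_j W i j = 1).

(* deterministic channels are maps 'I_2 -> 'I_n; their 0-1 matrix *)
Definition det_mx (n : nat) (D : {ffun 'I_2 -> 'I_n}) : 'M[R]_(2, n) :=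
  \matrix_(i, j) (D i == j)%:R.

Definition rankD (n : nat) (D : {ffun 'I_2 -> 'I_n}) : nat := \rank (det_mx D).

Definition is_dist (T : finType) (p : T -> R) : Prop :=
  (forall t, 0 <= p t) /\ \sum_t p t = 1.

Definition Lambda (n : nat) (W : 'M[R]_(2, n)) : set ({ffun 'I_2 -> 'I_n} -> R) :=
  [set lam | is_dist lam /\ W = \sum_D lam D *: det_mx D].

Definition outdist (n : nat) (mu : 'I_2 -> R) (K : 'M[R]_(2, n)) (y : 'I_n) : R :=
  \sum_x mu x * K x y.

Definition KL (n : nat) (p q : 'I_n -> R) : R :=
  \sum_y (if p y == 0 then 0 else p y * log2 (p y / q y)).

Definition MI (n : nat) (mu : 'I_2 -> R) (K : 'M[R]_(2, n)) : R :=
  \sum_x mu x * KL (fun y => K x y) (outdist mu K).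

Definition C11 (n : nat) (lam : {ffun 'I_2 -> 'I_n} -> R) : R :=
  \sum_D lam D * log2 (rankD D)%:R.

(* C01(lam) = max_mu sum_D lam_D I(mu, D)  (stated as a supremum) *)
Definition C01 (n : nat) (lam : {ffun 'I_2 -> 'I_n} -> R) : R :=
  sup [set \sum_D lam D * MI mu (det_mx D) | mu in [set mu : 'I_2 -> R | is_dist mu]].

Definition Plam (n : nat) (r : nat) (lam : {ffun 'I_2 -> 'I_n} -> R) : R :=
  \sum_(D | rankD D == r) lam D.

Definition C01_lower (n : nat) (W : 'M[R]_(2, n)) : R :=
  inf [set C01 lam | lam in Lambda W].
Definition C01_upper (n : nat) (W : 'M[R]_(2, n)) : R :=
  sup [set C01 lam | lam in Lambda W].
Definition P_lower (n : nat) (W : 'M[R]_(2, n)) (r : nat) : R :=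
  inf [set Plam r lam | lam in Lambda W].
Definition P_upper (n : nat) (W : 'M[R]_(2, n)) (r : nat) : R :=
  sup [set Plam r lam | lam in Lambda W].

End Defs.

From HB Require Import structures.
From mathcomp Require Import all_boot all_order all_algebra.
From mathcomp Require Import all_classical all_reals all_analysis.
From mathcomp Require Import lra.
Set Implicit Arguments. Unset Strict Implicit. Unset Printing Implicit Defensive.
Import Order.TTheory GRing.Theory Num.Theory.
Local Open Scope ring_scope.
Local Open Scope classical_set_scope.

(* A deterministic channel D from two inputs has rank 1 if it is constant and
   rank 2 otherwise, and I(mu, D) is accordingly 0 or the binary entropy H(mu).
   Hence sum_D lam_D I(mu, D) = P_lam(2) H(mu), maximised by the uniform input
   where H = 1, so C01(lam) = P_lam(2) = C11(lam) = 1 - P_lam(1).  The bounds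
   over Lambda(W) are then inf/sup of 1 - P_lam(1); Lambda(W) is nonempty since
   it contains the product of the two rows of W. *)

Lemma ord2_cases (i : 'I_2) : i = ord0 \/ i = ord_max.
Proof. by case: i => [[|[|]]] // ?; [left | right]; apply: val_inj. Qed.

Lemma ord2_const (T : Type) (f : 'I_2 -> T) :
  f ord0 = f ord_max -> forall x, f x = f ord0.
Proof. by move=> f01 x; case: (ord2_cases x) => ->. Qed.

Lemma ord2_inj (T : eqType) (f : 'I_2 -> T) : f ord0 != f ord_max -> injective f.
Proof.
move=> f01 x y; case: (ord2_cases x) (ord2_cases y) => -> [] -> // fxy;
  by rewrite fxy eqxx in f01.
Qed.

Section Sup.
Variable R : realType.
Implicit Types (E : set R) (c x : R).

Lemma sup_max E x : E x -> ubound E x -> sup E = x.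
Proof.
move=> Ex ubx; apply/le_anti; rewrite ge_sup //=; last by exists x.
by apply: ub_le_sup => //; exists x.
Qed.

Lemma sup_addl c E : has_sup E -> sup [set c + x | x in E] = c + sup E.
Proof.
move=> supE; have supc : has_sup [set c] by split; exists c => // _ ->.
rewrite -[in RHS](sup1 c) -sup_sumE //.
congr sup; apply/seteqP; split=> [_ [x Ex <-]|_ [_ -> [x Ex <-]]].
  by exists c => //; exists x.
by exists x.
Qed.

Lemma inf_subl c E : has_sup E -> inf [set c - x | x in E] = c - sup E.
Proof.
move=> supE; rewrite /inf image_comp (eq_imagel (f' := fun x => - c + x)); last first.
  by move=> x _ /=; rewrite opprB addrC.
by rewrite sup_addl // opprD opprK.
Qed.

Lemma sup_subl c E : has_inf E -> sup [set c - x | x in E] = c - inf E.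
Proof. by move=> /has_inf_supN infE; rewrite /inf opprK -sup_addl // image_comp. Qed.

End Sup.

Section Capacity.
Variable R : realType.

Lemma log2_1 : log2 (1 : R) = 0.
Proof. by rewrite /log2 ln1 mul0r. Qed.

Lemma ln2_gt0 : 0 < ln (2 : R).
Proof. by rewrite ln_gt0 // ltr1n. Qed.

Lemma log2_2 : log2 (2 : R) = 1.
Proof. by rewrite /log2 divff // gt_eqF // ln2_gt0. Qed.

Lemma mul_ln_inv_le (p c : R) : 0 <= p -> 0 < c -> p * ln p^-1 <= c - p + p * ln c^-1.
Proof.
move=> p_ge0 c_gt0; have [->|p_neq0] := eqVneq p 0.
  by rewrite !mul0r subr0 addr0 ltW.
have p_gt0 : 0 < p by rewrite lt_def p_neq0.
have cp_gt0 : 0 < c / p by rewrite divr_gt0.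
have lnE : ln p^-1 = ln (c / p) + ln c^-1.
  by rewrite -lnM ?posrE ?invr_gt0 // mulrC mulrA mulVf ?gt_eqF ?mul1r.
have ln_le : ln (c / p) <= c / p - 1.
  by have := @le_ln1Dx R (c / p - 1); rewrite addrCA subrr addr0; apply; lra.
rewrite lnE mulrDr lerD2r; have := ler_wpM2l p_ge0 ln_le.
by rewrite mulrBr mulr1 mulrCA mulfV // mulr1.
Qed.

(* At [p t = 0] the term is [0 * log2 0^-1 = 0], the usual [0 log 0 = 0]. *)
Definition entropy (T : finType) (p : T -> R) : R := \sum_t p t * log2 (p t)^-1.

Lemma entropy_le_log2_card (T : finType) (p : T -> R) :
  is_dist p -> entropy p <= log2 #|T|%:R.
Proof.
case=> p_ge0 p_sum1; have N_gt0 : 0 < #|T|%:R :> R.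
  rewrite ltr0n lt0n; apply/negP => /eqP/card0_eq T0.
  by move: p_sum1; rewrite big_pred0 // => /eqP; rewrite eq_sym oner_eq0.
rewrite /entropy /log2; under eq_bigr do rewrite mulrA.
rewrite -mulr_suml ler_pM2r ?invr_gt0 ?ln2_gt0 //.
have Ninv_gt0 : 0 < (#|T|%:R : R)^-1 by rewrite invr_gt0.
rewrite (le_trans (ler_sum _ (fun t _ => mul_ln_inv_le (p_ge0 t) Ninv_gt0))) //.
rewrite big_split sumrB /= -mulr_suml p_sum1 sumr_const.
by rewrite -[_ *+ _]mulr_natl mulfV ?gt_eqF // invrK subrr add0r mul1r.
Qed.

Definition uniform (T : finType) : T -> R := fun=> #|T|%:R^-1.
Arguments uniform T : clear implicits.

Lemma uniform_dist (T : finType) : (0 < #|T|)%N -> is_dist (uniform T).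
Proof.
move=> T_gt0; split=> [t|]; first by rewrite /uniform invr_ge0 ler0n.
by rewrite /uniform sumr_const -[_ *+ _]mulr_natl mulfV // pnatr_eq0 -lt0n.
Qed.

Lemma entropy_uniform (T : finType) :
  (0 < #|T|)%N -> entropy (uniform T) = log2 #|T|%:R.
Proof.
move=> T_gt0; rewrite /entropy /uniform invrK sumr_const -[_ *+ _]mulr_natl mulrA.
by rewrite mulfV ?mul1r // pnatr_eq0 -lt0n.
Qed.

Section DeterministicChannel.
Variable n : nat.
Implicit Types (D : {ffun 'I_2 -> 'I_n}) (mu : 'I_2 -> R)
  (lam : {ffun 'I_2 -> 'I_n} -> R).

Lemma det_mx_row_free D : injective D -> row_free (det_mx R D).
Proof.
move=> D_inj; apply/row_freeP; exists (det_mx R D)^T; apply/matrixP => i k.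
rewrite !mxE (bigD1 (D i)) //= big1 => [|j /negbTE Dij]; last first.
  by rewrite !mxE eq_sym Dij mul0r.
by rewrite !mxE eqxx mul1r addr0 (inj_eq D_inj) eq_sym.
Qed.

Lemma rank_det_mx_const D : D ord0 = D ord_max -> \rank (det_mx R D) = 1%N.
Proof.
move=> D01; apply/eqP; rewrite eqn_leq lt0n mxrank_eq0 andbC; apply/andP; split.
  apply/eqP => /matrixP/(_ ord0 (D ord0)); rewrite !mxE eqxx => /eqP.
  by rewrite oner_eq0.
have -> : det_mx R D = const_mx 1 *m (delta_mx ord0 (D ord0) : 'M[R]_(1, n)).
  apply/matrixP => i j; rewrite !mxE big_ord1 !mxE eqxx mul1r (ord2_const D01).
  by rewrite eq_sym.
by rewrite (leq_trans (mxrankM_maxr _ _)) ?mxrank_delta.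
Qed.

Lemma rankD_ord2 D : rankD R D = if D ord0 == D ord_max then 1%N else 2%N.
Proof.
rewrite /rankD; case: eqP => [/rank_det_mx_const //|/eqP/ord2_inj].
by move=> /det_mx_row_free/eqP.
Qed.

Lemma KL_det_mx D x (q : 'I_n -> R) :
  KL (fun y => det_mx R D x y) q = log2 (q (D x))^-1.
Proof.
rewrite /KL (bigD1 (D x)) //= big1 => [|y /negbTE Dxy]; last first.
  by rewrite !mxE (eq_sym (D x)) Dxy eqxx.
by rewrite !mxE eqxx oner_eq0 !mul1r addr0.
Qed.

Lemma outdist_det_mx mu D y : outdist mu (det_mx R D) y = \sum_(x | D x == y) mu x.
Proof.
rewrite /outdist [RHS]big_mkcond; apply: eq_bigr => x _.
by rewrite mxE; case: eqP; rewrite ?mulr1 ?mulr0.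
Qed.

Lemma MI_det_mx mu D :
  is_dist mu -> MI mu (det_mx R D) = if D ord0 == D ord_max then 0 else entropy mu.
Proof.
case=> _ mu_sum1; rewrite /MI; under eq_bigr do rewrite KL_det_mx outdist_det_mx.
case: eqP => [/ord2_const D_const | /eqP/ord2_inj D_inj].
  apply: big1 => x _; rewrite (eq_bigl xpredT) => [|x'].
    by rewrite mu_sum1 invr1 log2_1 mulr0.
  by rewrite (D_const x) (D_const x') eqxx.
apply: eq_bigr => x _; congr (_ * log2 _^-1).
by apply: big_pred1 => x'; apply: inj_eq.
Qed.

Lemma Plam_ge0 r lam : is_dist lam -> 0 <= Plam r lam.
Proof. by case=> lam_ge0 _; apply: sumr_ge0. Qed.

Lemma Plam_le1 r lam : is_dist lam -> Plam r lam <= 1.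
Proof.
case=> lam_ge0 <-; rewrite [leRHS](bigID (fun D => rankD R D == r)) /=.
by rewrite lerDl sumr_ge0.
Qed.

Lemma Plam2E lam : is_dist lam -> Plam 2 lam = 1 - Plam 1 lam.
Proof.
case=> _ <-; rewrite (bigID (fun D => rankD R D == 1%N)) /= addrAC subrr add0r /Plam.
by apply: eq_bigl => D; rewrite rankD_ord2; case: ifP.
Qed.

Lemma sum_MI_det_mx lam mu : is_dist mu ->
  \sum_D lam D * MI mu (det_mx R D) = Plam 2 lam * entropy mu.
Proof.
move=> mu_dist; rewrite /Plam mulr_suml [RHS]big_mkcond; apply: eq_bigr => D _.
by rewrite MI_det_mx // rankD_ord2; case: eqP => _ /=; rewrite ?mulr0 ?mul0r.
Qed.

Lemma C11_ord2 lam : C11 lam = Plam 2 lam.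
Proof.
rewrite /C11 /Plam [RHS]big_mkcond; apply: eq_bigr => D _; rewrite rankD_ord2.
by case: eqP => _ /=; rewrite ?log2_1 ?log2_2 ?mulr0 ?mulr1.
Qed.

Lemma C01_ord2 lam : is_dist lam -> C01 lam = Plam 2 lam.
Proof.
move=> lam_dist; have card2_gt0 : (0 < #|'I_2|)%N by rewrite card_ord.
rewrite /C01; apply: sup_max.
  exists (uniform _); first exact: uniform_dist.
  rewrite sum_MI_det_mx ?(entropy_uniform card2_gt0); last exact: uniform_dist.
  by rewrite card_ord log2_2 mulr1.
move=> _ [mu mu_dist <-]; rewrite sum_MI_det_mx // ler_piMr ?Plam_ge0 //.
by rewrite (le_trans (entropy_le_log2_card mu_dist)) // card_ord log2_2.
Qed.

Lemma Lambda_prod_rows (W : 'M[R]_(2, n)) :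
  is_channel W -> Lambda W (fun D : {ffun 'I_2 -> 'I_n} => \prod_i W i (D i)).
Proof.
case=> W_ge0 W_sum1; split; first split.
- by move=> D; apply: prodr_ge0 => i _.
- by rewrite -bigA_distr_bigA /=; apply: big1 => i _.
apply/matrixP => x y; rewrite summxE.
(* Weighting the x-th factor by [j == y] makes the entry a sum of products,
   which factorises over the two rows. *)
pose F i j := W i j * (if i == x then (j == y)%:R else 1).
have -> : \sum_(D : {ffun 'I_2 -> 'I_n}) ((\prod_i W i (D i)) *: det_mx R D) x y =
          \sum_(D : {ffun 'I_2 -> 'I_n}) \prod_i F i (D i).
  apply: eq_bigr => D _.
  by rewrite !mxE /F big_split /= -big_mkcond big_pred1_eq.
rewrite -bigA_distr_bigA (bigD1 x) //= [X in _ * X]big1 => [|i /negbTE ix]; last first.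
  by rewrite /F ix; under eq_bigr do rewrite mulr1; apply: W_sum1.
rewrite /F eqxx (bigD1 y) //= eqxx mulr1 big1 ?addr0 ?mulr1 // => j /negbTE ->.
by rewrite mulr0.
Qed.

End DeterministicChannel.

End Capacity.

Theorem proposition1 (R : realType) (n : nat) (hn : (2 <= n)%N)
    (W : 'M[R]_(2, n)) (hW : is_channel W) :
  (forall lam, Lambda W lam -> C01 lam = C11 lam) /\
  C01_lower W = 1 - P_upper W 1 /\
  C01_upper W = 1 - P_lower W 1.
Proof.
have Lambda_dist lam : Lambda W lam -> is_dist lam by case.
have C01E lam : Lambda W lam -> C01 lam = 1 - Plam 1 lam.
  by move=> /Lambda_dist lam_dist; rewrite C01_ord2 // Plam2E.
(* Without a witness the inf and sup over [Lambda W] would be junk values. *)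
have Lambda_nonempty : Lambda W !=set0 by eexists; apply: Lambda_prod_rows hW.
have P1_sup : has_sup [set Plam 1 lam | lam in Lambda W].
  split; first exact: image_nonempty.
  by exists 1 => _ [lam /Lambda_dist lam_dist <-]; apply: Plam_le1.
have P1_inf : has_inf [set Plam 1 lam | lam in Lambda W].
  split; first exact: image_nonempty.
  by exists 0 => _ [lam /Lambda_dist lam_dist <-]; apply: Plam_ge0.
have C01_img : [set C01 lam | lam in Lambda W] =
               [set 1 - p | p in [set Plam 1 lam | lam in Lambda W]].
  by rewrite image_comp; apply: eq_imagel => lam /C01E.
split; first by move=> lam /Lambda_dist lam_dist; rewrite C01_ord2 // C11_ord2.
by rewrite /C01_lower /C01_upper /P_upper /P_lower C01_img inf_subl // sup_subl.
Qed.
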